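(* Let the functions satisfy the $M=2$ system and the boundary conditions (B) (see context). Then for all $s>0$, $$e_3-sx_1y_2+2\eta_2+\xi_0-\eta_1+\eta_1\xi_2=0,\qquad e_2-2e_3-sx_0y_1-\eta_2-2\xi_0-\xi_1+\eta_0\xi_1=0 .$$
   Context: Fix complex parameters $\nu_0,\nu_1,\nu_2$ with $\nu_2-\nu_1\notin\mathbb Z$, and let $e_1=\nu_0+\nu_1+\nu_2$, $e_2=\nu_0\nu_1+\nu_0\nu_2+\nu_1\nu_2$, $e_3=\nu_0\nu_1\nu_2$. The $M=2$ system is the following system for smooth complex-valued functions $x_0,x_1,x_2,y_0,y_1,y_2,\xi_0,\xi_1,\xi_2,\eta_0,\eta_1,\eta_2$ of $s\in(0,\infty)$, with $'=d/ds$: $sx_0'=-\eta_0x_0-x_1$, $sx_1'=-\eta_1x_0-x_2$, $sx_2'=-\eta_2x_0-sx_0+\xi_0x_0+\xi_1x_1+\xi_2x_2$, $sy_2'=-\xi_2y_2+y_1$, $sy_1'=-\xi_1y_2+y_0$, $sy_0'=-\xi_0y_2+sy_2+\eta_0y_0+\eta_1y_1+\eta_2y_2$, $\xi_0'=-x_0y_0$, $\xi_1'=-x_0y_1$, $\xi_2'=-x_0y_2$, $\eta_0'=-x_0y_2$, $\eta_1'=-x_1y_2$, $\eta_2'=-x_2y_2$. Boundary conditions (B): as $s\to0^+$, $\eta_0,\eta_1,\eta_2\to0$, $\xi_0\to-e_3$, $\xi_1\to e_2$, $\xi_2\to-e_1$, and $x_j(s)y_k(s)\to0$, $s\,x_j(s)y_k(s)\to0$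 for all $j,k\in\{0,1,2\}$. *)

From Stdlib Require Import Reals ZArith.
Open Scope R_scope.

Definition Cx : Type := (R * R)%type.
Definition RtoC (r : R) : Cx := (r, 0).
Definition Cadd (z w : Cx) : Cx := (fst z + fst w, snd z + snd w).
Definition Copp (z : Cx) : Cx := (- fst z, - snd z).
Definition Csub (z w : Cx) : Cx := Cadd z (Copp w).
Definition Cmul (z w : Cx) : Cx :=
  (fst z * fst w - snd z * snd w, fst z * snd w + snd z * fst w).
Definition Cnorm (z : Cx) : R := sqrt (fst z ^ 2 + snd z ^ 2).
Definition C0 : Cx := (0, 0).

Declare Scope C_scope.
Delimit Scope C_scope with C.
Infix "+" := Cadd : C_scope.
Infix "-" := Csub : C_scope.
Infix "*" := Cmul : C_scope.
Notation "- z" := (Copp z) : C_scope.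

Definition Cderiv_at (f : R -> Cx) (d : Cx) (s : R) : Prop :=
  derivable_pt_lim (fun t => fst (f t)) s (fst d) /\
  derivable_pt_lim (fun t => snd (f t)) s (snd d).

Definition Clim0plus (f : R -> Cx) (l : Cx) : Prop :=
  forall eps : R, 0 < eps ->
    exists delta : R, 0 < delta /\
      forall s : R, 0 < s < delta -> Cnorm (Csub (f s) l) < eps.

From Stdlib Require Import Reals ZArith List Lra.
Open Scope R_scope.

(* The pairing [T = x0 y0 + x1 y1 + x2 y2] is a first integral of the system
   (the x- and y-equations are adjoint to each other), and (B) forces [T -> 0]
   as [s -> 0+], so [T = 0].  Each of the two claimed expressions has
   derivative [-T] resp. [T], hence is constant on (0, oo), and by (B) its
   limit at [0+] is [e3 - e3 = 0] resp. [e2 - 2 e3 + 2 e3 - e2 = 0]. *)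

Ltac Csimpl := unfold Cmul, Cadd, Csub, Copp, RtoC, C0; simpl.
Ltac Cring := Csimpl; f_equal; ring.
Ltac Cfield := Csimpl; f_equal; field; lra.

Lemma Cmul_RtoC_solve (s : R) (a b : Cx) :
  (RtoC s * a = b)%C -> s <> 0 -> a = (RtoC (/ s) * b)%C.
Proof. intros <- Hs; destruct a; Cfield. Qed.

Definition Clim_right0 (f : R -> Cx) (l : Cx) : Prop :=
  limit1_in (fun t => fst (f t)) (Rlt 0) (fst l) 0 /\
  limit1_in (fun t => snd (f t)) (Rlt 0) (snd l) 0.

Lemma Rabs_le_sqrt_sum_sqr (u v : R) : Rabs u <= sqrt (u ^ 2 + v ^ 2).
Proof.
  rewrite <- sqrt_Rsqr_abs; apply sqrt_le_1_alt; unfold Rsqr; nra.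
Qed.

Lemma Clim0plus_components (f : R -> Cx) (l : Cx) :
  Clim0plus f l -> Clim_right0 f l.
Proof.
  intros H; split; intros eps Heps; destruct (H eps Heps) as [d [Hd Hf]];
    exists d; (split; [lra|]); intros t [Ht Htd]; simpl in *;
    unfold Rdist in *; rewrite Rminus_0_r, Rabs_pos_eq in Htd by lra;
    specialize (Hf t (conj Ht Htd)); unfold Cnorm, Csub, Cadd, Copp in Hf; simpl in Hf;
    (eapply Rle_lt_trans; [|exact Hf]).
  - apply Rabs_le_sqrt_sum_sqr.
  - rewrite Rplus_comm; apply Rabs_le_sqrt_sum_sqr.
Qed.

Lemma Clim_right0_const (c : Cx) : Clim_right0 (fun _ => c) c.
Proof. split; apply (limit_free (fun _ => _) _ 0). Qed.

Lemma Clim_right0_plus (f g : R -> Cx) (a b : Cx) :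
  Clim_right0 f a -> Clim_right0 g b -> Clim_right0 (fun t => f t + g t)%C (a + b)%C.
Proof. intros [] []; split; apply limit_plus; assumption. Qed.

Lemma Clim_right0_opp (f : R -> Cx) (a : Cx) :
  Clim_right0 f a -> Clim_right0 (fun t => - f t)%C (- a)%C.
Proof. intros []; split; apply limit_Ropp; assumption. Qed.

Lemma Clim_right0_minus (f g : R -> Cx) (a b : Cx) :
  Clim_right0 f a -> Clim_right0 g b -> Clim_right0 (fun t => f t - g t)%C (a - b)%C.
Proof. intros; apply Clim_right0_plus, Clim_right0_opp; assumption. Qed.

Lemma Clim_right0_mult (f g : R -> Cx) (a b : Cx) :
  Clim_right0 f a -> Clim_right0 g b -> Clim_right0 (fun t => f t * g t)%C (a * b)%C.
Proof.
  intros [] []; split; simpl.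
  - apply limit_minus; apply limit_mul; assumption.
  - apply limit_plus; apply limit_mul; assumption.
Qed.

Lemma limit1_in_right0_eq_const (f : R -> R) (c l : R) :
  (forall t, 0 < t -> f t = c) -> limit1_in f (Rlt 0) l 0 -> c = l.
Proof.
  intros Hc Hl; destruct (Req_dec c l) as [|Hne]; [assumption|].
  destruct (Hl (Rabs (c - l))) as [d [Hd Hf]]; [apply Rabs_pos_lt; lra|].
  assert (Hd2 : 0 < d / 2) by lra.
  specialize (Hf (d / 2)); simpl in Hf; unfold Rdist in Hf.
  rewrite Hc, Rminus_0_r, Rabs_pos_eq in Hf by lra; lra.
Qed.

Lemma Cderiv_at_ext (f : R -> Cx) (d d' : Cx) (s : R) :
  Cderiv_at f d s -> d = d' -> Cderiv_at f d' s.
Proof. intros H <-; exact H. Qed.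

Lemma Cderiv_at_const (c : Cx) (s : R) : Cderiv_at (fun _ => c) C0 s.
Proof. split; apply derivable_pt_lim_const. Qed.

Lemma Cderiv_at_id (s : R) : Cderiv_at (fun t => RtoC t) (RtoC 1) s.
Proof. split; [apply derivable_pt_lim_id | apply derivable_pt_lim_const]. Qed.

Lemma Cderiv_at_plus (f g : R -> Cx) (a b : Cx) (s : R) :
  Cderiv_at f a s -> Cderiv_at g b s -> Cderiv_at (fun t => f t + g t)%C (a + b)%C s.
Proof.
  intros [] []; split.
  - apply (derivable_pt_lim_plus (fun t => fst (f t)) (fun t => fst (g t))); assumption.
  - apply (derivable_pt_lim_plus (fun t => snd (f t)) (fun t => snd (g t))); assumption.
Qed.

Lemma Cderiv_at_opp (f : R -> Cx) (a : Cx) (s : R) :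
  Cderiv_at f a s -> Cderiv_at (fun t => - f t)%C (- a)%C s.
Proof.
  intros []; split.
  - apply (derivable_pt_lim_opp (fun t => fst (f t))); assumption.
  - apply (derivable_pt_lim_opp (fun t => snd (f t))); assumption.
Qed.

Lemma Cderiv_at_minus (f g : R -> Cx) (a b : Cx) (s : R) :
  Cderiv_at f a s -> Cderiv_at g b s -> Cderiv_at (fun t => f t - g t)%C (a - b)%C s.
Proof. intros; apply Cderiv_at_plus, Cderiv_at_opp; assumption. Qed.

Lemma Cderiv_at_mult (f g : R -> Cx) (a b : Cx) (s : R) :
  Cderiv_at f a s -> Cderiv_at g b s ->
  Cderiv_at (fun t => f t * g t)%C (a * g s + f s * b)%C s.
Proof.
  intros [Hf1 Hf2] [Hg1 Hg2]; split; simpl.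
  - replace (_ - _ + _) with ((fst a * fst (g s) + fst (f s) * fst b)
      - (snd a * snd (g s) + snd (f s) * snd b)) by ring.
    apply (derivable_pt_lim_minus (fun t => fst (f t) * fst (g t))
                                  (fun t => snd (f t) * snd (g t)));
      apply derivable_pt_lim_mult; assumption.
  - replace (_ + _ + _) with ((fst a * snd (g s) + fst (f s) * snd b)
      + (snd a * fst (g s) + snd (f s) * fst b)) by ring.
    apply (derivable_pt_lim_plus (fun t => fst (f t) * snd (g t))
                                 (fun t => snd (f t) * fst (g t)));
      apply derivable_pt_lim_mult; assumption.
Qed.

Lemma derivable_pt_lim_zero_eq_pos (g : R -> R) :
  (forall t, 0 < t -> derivable_pt_lim g t 0) ->
  forall a b, 0 < a -> 0 < b -> g a = g b.
Proof.
  intros Hg.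
  assert (Hlt : forall a b, 0 < a -> a < b -> g a = g b).
  { intros a b Ha Hab.
    destruct (MVT_cor2 g (fun _ => 0) a b Hab) as [c [Hc _]];
      [intros c Hc; apply Hg; lra | lra]. }
  intros a b Ha Hb; destruct (total_order_T a b) as [[Hab | <-] | Hba].
  - apply Hlt; assumption.
  - reflexivity.
  - symmetry; apply Hlt; assumption.
Qed.

Lemma Cderiv_zero_eq_lim_right0 (F : R -> Cx) (L : Cx) :
  (forall t, 0 < t -> Cderiv_at F C0 t) -> Clim_right0 F L ->
  forall s, 0 < s -> F s = L.
Proof.
  intros HF [Hl1 Hl2] s Hs.
  assert (Hfst : fst (F s) = fst L).
  { apply (limit1_in_right0_eq_const (fun t => fst (F t))); [|exact Hl1].
    intros t Ht; apply (derivable_pt_lim_zero_eq_pos (fun t => fst (F t)));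
      [intros u Hu; apply (HF u Hu) | assumption | assumption]. }
  assert (Hsnd : snd (F s) = snd L).
  { apply (limit1_in_right0_eq_const (fun t => snd (F t))); [|exact Hl2].
    intros t Ht; apply (derivable_pt_lim_zero_eq_pos (fun t => snd (F t)));
      [intros u Hu; apply (HF u Hu) | assumption | assumption]. }
  destruct (F s), L; simpl in *; subst; reflexivity.
Qed.

Ltac Cderiv_rules := repeat first
  [ eassumption | apply Cderiv_at_id | apply Cderiv_at_minus | apply Cderiv_at_plus
  | apply Cderiv_at_mult | apply Cderiv_at_opp | apply Cderiv_at_const ].
Ltac Clim_rules := repeat first
  [ eassumption | apply Clim_right0_minus | apply Clim_right0_plus
  | apply Clim_right0_mult | apply Clim_right0_opp | apply Clim_right0_const ].

Section M2System.

Context {nu0 nu1 nu2 : Cx}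
  {x0 x1 x2 y0 y1 y2 xi0 xi1 xi2 eta0 eta1 eta2 : R -> Cx}
  {dx0 dx1 dx2 dy0 dy1 dy2 dxi0 dxi1 dxi2 deta0 deta1 deta2 : R -> Cx}.

Hypotheses
  (Dx0 : forall s, 0 < s -> Cderiv_at x0 (dx0 s) s)
  (Dx1 : forall s, 0 < s -> Cderiv_at x1 (dx1 s) s)
  (Dx2 : forall s, 0 < s -> Cderiv_at x2 (dx2 s) s)
  (Dy0 : forall s, 0 < s -> Cderiv_at y0 (dy0 s) s)
  (Dy1 : forall s, 0 < s -> Cderiv_at y1 (dy1 s) s)
  (Dy2 : forall s, 0 < s -> Cderiv_at y2 (dy2 s) s)
  (Dxi0 : forall s, 0 < s -> Cderiv_at xi0 (dxi0 s) s)
  (Dxi1 : forall s, 0 < s -> Cderiv_at xi1 (dxi1 s) s)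
  (Dxi2 : forall s, 0 < s -> Cderiv_at xi2 (dxi2 s) s)
  (Deta0 : forall s, 0 < s -> Cderiv_at eta0 (deta0 s) s)
  (Deta1 : forall s, 0 < s -> Cderiv_at eta1 (deta1 s) s)
  (Deta2 : forall s, 0 < s -> Cderiv_at eta2 (deta2 s) s).

Hypotheses
  (E1 : forall s, 0 < s ->
     (RtoC s * dx0 s = - (eta0 s * x0 s) - x1 s)%C)
  (E2 : forall s, 0 < s ->
     (RtoC s * dx1 s = - (eta1 s * x0 s) - x2 s)%C)
  (E3 : forall s, 0 < s ->
     (RtoC s * dx2 s = - (eta2 s * x0 s) - RtoC s * x0 s
        + xi0 s * x0 s + xi1 s * x1 s + xi2 s * x2 s)%C)
  (E4 : forall s, 0 < s ->
     (RtoC s * dy2 s = - (xi2 s * y2 s) + y1 s)%C)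
  (E5 : forall s, 0 < s ->
     (RtoC s * dy1 s = - (xi1 s * y2 s) + y0 s)%C)
  (E6 : forall s, 0 < s ->
     (RtoC s * dy0 s = - (xi0 s * y2 s) + RtoC s * y2 s
        + eta0 s * y0 s + eta1 s * y1 s + eta2 s * y2 s)%C)
  (E7 : forall s, 0 < s -> dxi0 s = (- (x0 s * y0 s))%C)
  (E8 : forall s, 0 < s -> dxi1 s = (- (x0 s * y1 s))%C)
  (E9 : forall s, 0 < s -> dxi2 s = (- (x0 s * y2 s))%C)
  (E10 : forall s, 0 < s -> deta0 s = (- (x0 s * y2 s))%C)
  (E11 : forall s, 0 < s -> deta1 s = (- (x1 s * y2 s))%C)
  (E12 : forall s, 0 < s -> deta2 s = (- (x2 s * y2 s))%C).

Hypotheses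
  (B1 : Clim0plus eta0 C0)
  (B2 : Clim0plus eta1 C0)
  (B3 : Clim0plus eta2 C0)
  (B4 : Clim0plus xi0 (- (nu0 * nu1 * nu2))%C)
  (B5 : Clim0plus xi1 (nu0 * nu1 + nu0 * nu2 + nu1 * nu2)%C)
  (B6 : Clim0plus xi2 (- (nu0 + nu1 + nu2))%C)
  (B7 : forall (x y : R -> Cx), In x (x0 :: x1 :: x2 :: nil) ->
          In y (y0 :: y1 :: y2 :: nil) ->
          Clim0plus (fun s => (x s * y s)%C) C0 /\
          Clim0plus (fun s => (RtoC s * (x s * y s))%C) C0).

Let pairing (t : R) : Cx := (x0 t * y0 t + x1 t * y1 t + x2 t * y2 t)%C.

Lemma pairing_vanishes : forall t, 0 < t -> pairing t = C0.
Proof.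
  apply Cderiv_zero_eq_lim_right0; unfold pairing.
  - intros u Hu.
    pose proof (Dx0 u Hu); pose proof (Dx1 u Hu); pose proof (Dx2 u Hu).
    pose proof (Dy0 u Hu); pose proof (Dy1 u Hu); pose proof (Dy2 u Hu).
    eapply Cderiv_at_ext; [Cderiv_rules|].
    rewrite (Cmul_RtoC_solve _ _ _ (E1 u Hu)), (Cmul_RtoC_solve _ _ _ (E2 u Hu)),
      (Cmul_RtoC_solve _ _ _ (E3 u Hu)), (Cmul_RtoC_solve _ _ _ (E4 u Hu)),
      (Cmul_RtoC_solve _ _ _ (E5 u Hu)), (Cmul_RtoC_solve _ _ _ (E6 u Hu)) by lra.
    Cfield.
  - replace C0 with (C0 + C0 + C0)%C by Cring.
    Clim_rules; apply Clim0plus_components, B7; simpl; auto.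
Qed.

Let first_integral (t : R) : Cx :=
  (nu0 * nu1 * nu2 - RtoC t * (x1 t * y2 t) + RtoC 2 * eta2 t + xi0 t - eta1 t
     + eta1 t * xi2 t)%C.

Let second_integral (t : R) : Cx :=
  (nu0 * nu1 + nu0 * nu2 + nu1 * nu2 - RtoC 2 * (nu0 * nu1 * nu2)
     - RtoC t * (x0 t * y1 t) - eta2 t - RtoC 2 * xi0 t - xi1 t + eta0 t * xi1 t)%C.

Lemma first_integral_vanishes : forall s, 0 < s -> first_integral s = C0.
Proof.
  apply Cderiv_zero_eq_lim_right0; unfold first_integral.
  - intros u Hu.
    pose proof (Dx1 u Hu); pose proof (Dy2 u Hu); pose proof (Dxi0 u Hu).
    pose proof (Dxi2 u Hu); pose proof (Deta1 u Hu); pose proof (Deta2 u Hu).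
    eapply Cderiv_at_ext; [Cderiv_rules|].
    rewrite (Cmul_RtoC_solve _ _ _ (E2 u Hu)), (Cmul_RtoC_solve _ _ _ (E4 u Hu)),
      (E7 u Hu), (E9 u Hu), (E11 u Hu), (E12 u Hu) by lra.
    transitivity (- pairing u)%C; [unfold pairing; Cfield|].
    rewrite pairing_vanishes by exact Hu; Cring.
  - pose proof (Clim0plus_components _ _ B2); pose proof (Clim0plus_components _ _ B3).
    pose proof (Clim0plus_components _ _ B4); pose proof (Clim0plus_components _ _ B6).
    pose proof (Clim0plus_components _ _ (proj2 (B7 x1 y2 ltac:(simpl; auto) ltac:(simpl; auto)))).
    replace C0 with (nu0 * nu1 * nu2 - C0 + RtoC 2 * C0 + - (nu0 * nu1 * nu2) - C0
                     + C0 * - (nu0 + nu1 + nu2))%C by Cring.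
    Clim_rules.
Qed.

Lemma second_integral_vanishes : forall s, 0 < s -> second_integral s = C0.
Proof.
  apply Cderiv_zero_eq_lim_right0; unfold second_integral.
  - intros u Hu.
    pose proof (Dx0 u Hu); pose proof (Dy1 u Hu); pose proof (Dxi0 u Hu).
    pose proof (Dxi1 u Hu); pose proof (Deta0 u Hu); pose proof (Deta2 u Hu).
    eapply Cderiv_at_ext; [Cderiv_rules|].
    rewrite (Cmul_RtoC_solve _ _ _ (E1 u Hu)), (Cmul_RtoC_solve _ _ _ (E5 u Hu)),
      (E7 u Hu), (E8 u Hu), (E10 u Hu), (E12 u Hu) by lra.
    transitivity (pairing u); [unfold pairing; Cfield|].
    apply pairing_vanishes, Hu.
  - pose proof (Clim0plus_components _ _ B1); pose proof (Clim0plus_components _ _ B3).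
    pose proof (Clim0plus_components _ _ B4); pose proof (Clim0plus_components _ _ B5).
    pose proof (Clim0plus_components _ _ (proj2 (B7 x0 y1 ltac:(simpl; auto) ltac:(simpl; auto)))).
    replace C0 with (nu0 * nu1 + nu0 * nu2 + nu1 * nu2 - RtoC 2 * (nu0 * nu1 * nu2)
                     - C0 - C0 - RtoC 2 * - (nu0 * nu1 * nu2)
                     - (nu0 * nu1 + nu0 * nu2 + nu1 * nu2)
                     + C0 * (nu0 * nu1 + nu0 * nu2 + nu1 * nu2))%C by Cring.
    Clim_rules.
Qed.

End M2System.

Theorem mainTheorem7
  (nu0 nu1 nu2 : Cx)
  (Hnu : forall k : Z, Csub nu2 nu1 <> RtoC (IZR k))
  (x0 x1 x2 y0 y1 y2 xi0 xi1 xi2 eta0 eta1 eta2 : R -> Cx)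
  (dx0 dx1 dx2 dy0 dy1 dy2 dxi0 dxi1 dxi2 deta0 deta1 deta2 : R -> Cx)
  (Dx0 : forall s, 0 < s -> Cderiv_at x0 (dx0 s) s)
  (Dx1 : forall s, 0 < s -> Cderiv_at x1 (dx1 s) s)
  (Dx2 : forall s, 0 < s -> Cderiv_at x2 (dx2 s) s)
  (Dy0 : forall s, 0 < s -> Cderiv_at y0 (dy0 s) s)
  (Dy1 : forall s, 0 < s -> Cderiv_at y1 (dy1 s) s)
  (Dy2 : forall s, 0 < s -> Cderiv_at y2 (dy2 s) s)
  (Dxi0 : forall s, 0 < s -> Cderiv_at xi0 (dxi0 s) s)
  (Dxi1 : forall s, 0 < s -> Cderiv_at xi1 (dxi1 s) s)
  (Dxi2 : forall s, 0 < s -> Cderiv_at xi2 (dxi2 s) s)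
  (Deta0 : forall s, 0 < s -> Cderiv_at eta0 (deta0 s) s)
  (Deta1 : forall s, 0 < s -> Cderiv_at eta1 (deta1 s) s)
  (Deta2 : forall s, 0 < s -> Cderiv_at eta2 (deta2 s) s)
  (E1 : forall s, 0 < s ->
     (RtoC s * dx0 s = - (eta0 s * x0 s) - x1 s)%C)
  (E2 : forall s, 0 < s ->
     (RtoC s * dx1 s = - (eta1 s * x0 s) - x2 s)%C)
  (E3 : forall s, 0 < s ->
     (RtoC s * dx2 s = - (eta2 s * x0 s) - RtoC s * x0 s
        + xi0 s * x0 s + xi1 s * x1 s + xi2 s * x2 s)%C)
  (E4 : forall s, 0 < s ->
     (RtoC s * dy2 s = - (xi2 s * y2 s) + y1 s)%C)
  (E5 : forall s, 0 < s ->
     (RtoC s * dy1 s = - (xi1 s * y2 s) + y0 s)%C)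
  (E6 : forall s, 0 < s ->
     (RtoC s * dy0 s = - (xi0 s * y2 s) + RtoC s * y2 s
        + eta0 s * y0 s + eta1 s * y1 s + eta2 s * y2 s)%C)
  (E7 : forall s, 0 < s -> dxi0 s = (- (x0 s * y0 s))%C)
  (E8 : forall s, 0 < s -> dxi1 s = (- (x0 s * y1 s))%C)
  (E9 : forall s, 0 < s -> dxi2 s = (- (x0 s * y2 s))%C)
  (E10 : forall s, 0 < s -> deta0 s = (- (x0 s * y2 s))%C)
  (E11 : forall s, 0 < s -> deta1 s = (- (x1 s * y2 s))%C)
  (E12 : forall s, 0 < s -> deta2 s = (- (x2 s * y2 s))%C)
  (B1 : Clim0plus eta0 C0)
  (B2 : Clim0plus eta1 C0)
  (B3 : Clim0plus eta2 C0)
  (B4 : Clim0plus xi0 (- (nu0 * nu1 * nu2))%C)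
  (B5 : Clim0plus xi1 (nu0 * nu1 + nu0 * nu2 + nu1 * nu2)%C)
  (B6 : Clim0plus xi2 (- (nu0 + nu1 + nu2))%C)
  (B7 : forall (x y : R -> Cx), In x (x0 :: x1 :: x2 :: nil) ->
          In y (y0 :: y1 :: y2 :: nil) ->
          Clim0plus (fun s => (x s * y s)%C) C0 /\
          Clim0plus (fun s => (RtoC s * (x s * y s))%C) C0) :
  let e1 := (nu0 + nu1 + nu2)%C in
  let e2 := (nu0 * nu1 + nu0 * nu2 + nu1 * nu2)%C in
  let e3 := (nu0 * nu1 * nu2)%C in
  forall s : R, 0 < s ->
    (e3 - RtoC s * (x1 s * y2 s) + RtoC 2 * eta2 s + xi0 s - eta1 s
       + eta1 s * xi2 s = C0)%C /\
    (e2 - RtoC 2 * e3 - RtoC s * (x0 s * y1 s) - eta2 s - RtoC 2 * xi0 s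
       - xi1 s + eta0 s * xi1 s = C0)%C.
Proof.
  intros e1 e2 e3 s Hs; split.
  - exact (first_integral_vanishes Dx0 Dx1 Dx2 Dy0 Dy1 Dy2 Dxi0 Dxi2 Deta1 Deta2
             E1 E2 E3 E4 E5 E6 E7 E9 E11 E12 B2 B3 B4 B6 B7 s Hs).
  - exact (second_integral_vanishes Dx0 Dx1 Dx2 Dy0 Dy1 Dy2 Dxi0 Dxi1 Deta0 Deta2
             E1 E2 E3 E4 E5 E6 E7 E8 E10 E12 B1 B3 B4 B5 B7 s Hs).
Qed.
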